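(* Let $K$ be any one of the prime knots $6_3$, $8_7$, $8_8$, $8_{10}$, $8_{16}$ (Rolfsen knot table notation). Then the knot quandle $Q(K)$ is not bi-orderable.
   Context: A quandle is a non-empty set $Q$ with a binary operation $*$ such that: (Q1) $x*x=x$ for all $x\in Q$; (Q2) for each $x,y\in Q$ there is a unique $z\in Q$ with $x=z*y$ (write $z=x*^{-1}y$); (Q3) $(x*y)*z=(x*z)*(y*z)$ for all $x,y,z\in Q$. The knot quandle $Q(K)$ of an oriented knot $K$ (Joyce, Matveev) is the quandle presented as follows: fix an oriented diagram $D$ of $K$; generators are the arcs of $D$; at each crossing with over-arc $y$, incoming under-arc $x$ and outgoing under-arc $z$, impose the relation $z=x*y$ if the crossing is positive and $z=x*^{-1}y$ if it is negative. A quandle $Q$ is bi-orderable if there is a strict linear order $<$ on $Q$ such that for all $x,y,z\in Q$, $x<y$ implies both $z*x<z*y$ (left-orderability) and $x*z<y*z$ (right-orderability). *)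

From Stdlib Require Import List FunctionalExtensionality PropExtensionality.
From mathcomp Require Import all_boot.
Set Implicit Arguments.
Unset Strict Implicit.
Unset Printing Implicit Defensive.

Definition strict_linear_order (Q : Type) (lt : Q -> Q -> Prop) : Prop :=
  (forall x, ~ lt x x) /\
  (forall x y z, lt x y -> lt y z -> lt x z) /\
  (forall x y, x <> y -> lt x y \/ lt y x).

Definition bi_orderable (Q : Type) (op : Q -> Q -> Q) : Prop :=
  exists lt : Q -> Q -> Prop,
    strict_linear_order lt /\
    (forall x y z, lt x y -> lt (op z x) (op z y)) /\
    (forall x y z, lt x y -> lt (op x z) (op y z)).

(* A relation (x, y, z, s) means  z = x * y  if s = true (positive      *)
(* crossing) and  z = x *^-1 y  if s = false (negative crossing).       *)

Inductive qterm (A : Type) : Type :=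
| qgen : A -> qterm A
| qop  : qterm A -> qterm A -> qterm A
| qinv : qterm A -> qterm A -> qterm A.

Arguments qgen {A}.
Arguments qop {A}.
Arguments qinv {A}.

Inductive qeq (A : Type) (R : list (A * A * A * bool)) : qterm A -> qterm A -> Prop :=
| qe_refl t : qeq R t t
| qe_sym t u : qeq R t u -> qeq R u t
| qe_trans t u v : qeq R t u -> qeq R u v -> qeq R t v
| qe_op t t' u u' : qeq R t t' -> qeq R u u' -> qeq R (qop t u) (qop t' u')
| qe_inv t t' u u' : qeq R t t' -> qeq R u u' -> qeq R (qinv t u) (qinv t' u')
| qe_idem x : qeq R (qop x x) x
| qe_invr x y : qeq R (qop (qinv x y) y) x
| qe_invl x y : qeq R (qinv (qop x y) y) x
| qe_dist x y z : qeq R (qop (qop x y) z) (qop (qop x z) (qop y z))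
| qe_rel x y z (s : bool) : In (x, y, z, s) R ->
    qeq R (qgen z) (if s then qop (qgen x) (qgen y) else qinv (qgen x) (qgen y)).

Definition pquandle (A : Type) (R : list (A * A * A * bool)) : Type :=
  { P : qterm A -> Prop | exists t, P = qeq R t }.

Definition pq_class (A : Type) (R : list (A * A * A * bool)) (t : qterm A)
  : pquandle R := exist _ (qeq R t) (ex_intro _ t erefl).

Lemma qeq_class_eq (A : Type) (R : list (A * A * A * bool)) (t u : qterm A) :
  qeq R t u -> qeq R t = qeq R u.
Proof.
move=> H; apply: functional_extensionality => s.
apply: propositional_extensionality; split => Hs.
- exact: qe_trans (qe_sym H) Hs.
- exact: qe_trans H Hs.
Qed.

Lemma pq_op_spec (A : Type) (R : list (A * A * A * bool)) (P Q : pquandle R) :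
  exists t, (fun s => exists a b, proj1_sig P a /\ proj1_sig Q b /\ qeq R (qop a b) s)
            = qeq R t.
Proof.
case: P => P HP; case: Q => Q HQ /=.
case: HP => a0 HP; case: HQ => b0 HQ.
exists (qop a0 b0); apply: functional_extensionality => s.
apply: propositional_extensionality; split.
- move=> [a [b [Ha [Hb Hs]]]].
  rewrite HP in Ha; rewrite HQ in Hb.
  exact: qe_trans (qe_op Ha Hb) Hs.
- move=> Hs; exists a0, b0; rewrite HP HQ.
  split; [exact: qe_refl | split; [exact: qe_refl | exact: Hs]].
Qed.

Definition pq_op (A : Type) (R : list (A * A * A * bool)) (P Q : pquandle R)
  : pquandle R :=
  exist _ (fun s => exists a b, proj1_sig P a /\ proj1_sig Q b /\ qeq R (qop a b) s)
          (pq_op_spec P Q).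

(* Arcs are 'I_narcs; a crossing (x, y, z, s) has incoming under-arc x, *)
(* over-arc y, outgoing under-arc z and sign s (true = positive).       *)

Record diagram := Diagram {
  narcs : nat;
  crossings : list ('I_narcs * 'I_narcs * 'I_narcs * bool) }.

Definition knot_quandle (D : diagram) : Type := pquandle (crossings D).
Definition knot_quandle_op (D : diagram) : knot_quandle D -> knot_quandle D -> knot_quandle D :=
  @pq_op _ (crossings D).

(* mirror image: reflect the diagram in a line of the plane; arcs are
   unchanged and every crossing changes sign. *)
Definition mirror (D : diagram) : diagram :=
  @Diagram (narcs D) (map (fun c => match c with (x, y, z, s) => (x, y, z, ~~ s) end)
                          (crossings D)).

Definition mkc (m : nat) (x y z : nat) (s : bool) : 'I_m.+1 * 'I_m.+1 * 'I_m.+1 * bool :=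
  (inord x, inord y, inord z, s).

(* Alternating diagrams obtained from the Dowker-Thistlethwaite codes
   6_3: 4 8 10 2 12 6          8_7: 4 10 12 14 2 16 6 8
   8_8: 4 8 12 2 16 14 6 10    8_10: 4 8 12 2 14 16 6 10
   8_16: 6 8 14 12 4 16 2 10
   (checked: Alexander polynomials 1-3t+5t^2-3t^3+t^4, 1-3t+5t^2-5t^3+5t^4-3t^5+t^6,
    2-6t+9t^2-6t^3+2t^4, 1-3t+6t^2-7t^3+6t^4-3t^5+t^6, 1-4t+8t^2-9t^3+8t^4-4t^5+t^6). *)

Definition knot_6_3 : diagram := @Diagram 6
  [:: mkc 5 5 1 0 false; mkc 5 0 3 1 false; mkc 5 1 4 2 true;
      mkc 5 2 0 3 false; mkc 5 3 5 4 true;  mkc 5 4 2 5 true].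

Definition knot_8_7 : diagram := @Diagram 8
  [:: mkc 7 7 1 0 false; mkc 7 0 4 1 false; mkc 7 1 5 2 true; mkc 7 2 6 3 true;
      mkc 7 3 0 4 false; mkc 7 4 7 5 true;  mkc 7 5 2 6 true; mkc 7 6 3 7 true].

Definition knot_8_8 : diagram := @Diagram 8
  [:: mkc 7 7 1 0 false; mkc 7 0 3 1 false; mkc 7 1 5 2 true; mkc 7 2 0 3 false;
      mkc 7 3 7 4 true;  mkc 7 4 6 5 true;  mkc 7 5 2 6 true; mkc 7 6 4 7 true].

Definition knot_8_10 : diagram := @Diagram 8
  [:: mkc 7 7 1 0 false; mkc 7 0 3 1 false; mkc 7 1 5 2 true; mkc 7 2 0 3 false;
      mkc 7 3 6 4 true;  mkc 7 4 7 5 true;  mkc 7 5 2 6 true; mkc 7 6 4 7 true].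

Definition knot_8_16 : diagram := @Diagram 8
  [:: mkc 7 7 2 0 false; mkc 7 0 3 1 true;  mkc 7 1 6 2 false; mkc 7 2 5 3 true;
      mkc 7 3 1 4 true;  mkc 7 4 7 5 true;  mkc 7 5 0 6 false; mkc 7 6 4 7 true].

Definition the_knots : list diagram :=
  [:: knot_6_3; knot_8_7; knot_8_8; knot_8_10; knot_8_16].

From Stdlib Require Import List Lia ClassicalEpsilon.
From Stdlib Require Import ProofIrrelevance FunctionalExtensionality PropExtensionality.
From mathcomp Require Import all_boot all_algebra ring zify.

(* In a bi-ordered quandle every translation x |-> x * e and x |-> e * x is
   strictly monotone, so it preserves the comparison (<, =, >) of any two
   elements.  Ranking the finitely many arc generators of Q(K) turns each such
   instance coming from a crossing relation or from idempotency into a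
   constraint between natural numbers.  For each of the ten diagrams (the five
   knots and their mirror images) a handful of these constraints, found by a
   computer search and listed below, already forces arcs 0 and 1 to have the
   same rank, i.e. to be equal in Q(K); this is checked by case analysis.  A Fox
   colouring modulo p, which is a quandle map from Q(K) onto the Takasaki
   quandle x * y = 2y - x of Z/p, separates these two arcs. *)

Set Implicit Arguments.
Unset Strict Implicit.
Unset Printing Implicit Defensive.

Inductive order_agree (a b c d : nat) : Prop :=
| AgreeLt of a < b & c < d
| AgreeEq of a = b & c = d
| AgreeGt of b < a & d < c.

Section Rank.
Variables (T : Type) (lt : T -> T -> Prop).
Hypothesis lt_slo : strict_linear_order lt.
Variables (I : finType) (f : I -> T).

Let lt_irr x : ~ lt x x. Proof. by case: lt_slo. Qed.
Let lt_trans x y z : lt x y -> lt y z -> lt x z.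
Proof. by case: lt_slo => _ [tr _]; apply: tr. Qed.

Lemma lt_trichotomy x y : lt x y \/ x = y \/ lt y x.
Proof.
case: (classic (x = y)) => [|/(proj2 (proj2 lt_slo))]; first by right; left.
by case; [left | right; right].
Qed.

Definition ltb (x y : T) : bool :=
  if excluded_middle_informative (lt x y) then true else false.

Lemma ltbP x y : ltb x y <-> lt x y.
Proof. by rewrite /ltb; case: excluded_middle_informative. Qed.

Definition rank (i : I) : nat := #|[pred j | ltb (f j) (f i)]|.

Lemma rank_lt i j : lt (f i) (f j) -> rank i < rank j.
Proof.
move=> fij; apply: proper_card; apply/properP; split.
- by apply/subsetP => k; rewrite !inE => /ltbP fki; apply/ltbP; apply: lt_trans fij.
- by exists i; rewrite !inE; [apply/ltbP | apply/negP => /ltbP /lt_irr].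
Qed.

Lemma rank_eq i j : f i = f j -> rank i = rank j.
Proof. by rewrite /rank => ->. Qed.

Lemma rank_inj i j : rank i = rank j -> f i = f j.
Proof.
move=> rij; case: (lt_trichotomy (f i) (f j)) => [/rank_lt|[//|/rank_lt]]; lia.
Qed.

Lemma order_agree_rank (h : T -> T) a b c d :
  (forall x y, lt x y -> lt (h x) (h y)) -> f c = h (f a) -> f d = h (f b) ->
  order_agree (rank a) (rank b) (rank c) (rank d).
Proof.
move=> h_mono fc fd; case: (lt_trichotomy (f a) (f b)) => [ab|[ab|ba]].
- by apply: AgreeLt; apply: rank_lt; rewrite ?fc ?fd //; apply: h_mono.
- by apply: AgreeEq; apply: rank_eq; rewrite ?fc ?fd ab.
- by apply: AgreeGt; apply: rank_lt; rewrite ?fc ?fd //; apply: h_mono.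
Qed.

End Rank.

Lemma inP (T : eqType) (x : T) (s : seq T) : reflect (In x s) (x \in s).
Proof.
elim: s => [|y s IH] /=; first by constructor.
rewrite in_cons; apply: (iffP orP) => [[/eqP->|/IH]|[->|/IH]]; by [left | right | rewrite eqxx].
Qed.

Section PresentedQuandle.
Variables (A : Type) (R : seq (A * A * A * bool)).

Lemma pq_ext (P P' : pquandle R) : proj1_sig P = proj1_sig P' -> P = P'.
Proof.
case: P => P HP; case: P' => P' HP' /= E; subst P'.
by rewrite (proof_irrelevance _ HP HP').
Qed.

Lemma pq_class_eq t u : qeq R t u -> pq_class R t = pq_class R u.
Proof. by move=> tu; apply: pq_ext; apply: qeq_class_eq. Qed.

Lemma pq_class_op a b : pq_op (pq_class R a) (pq_class R b) = pq_class R (qop a b).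
Proof.
apply: pq_ext => /=; apply: functional_extensionality => s.
apply: propositional_extensionality; split.
- by move=> [a' [b' [Ha [Hb Hs]]]]; apply: qe_trans (qe_op Ha Hb) Hs.
- by move=> Hs; exists a, b; split; [apply: qe_refl | split; [apply: qe_refl|]].
Qed.

Definition gen (x : A) : pquandle R := pq_class R (qgen x).

Lemma gen_idem x : pq_op (gen x) (gen x) = gen x.
Proof. by rewrite pq_class_op; apply: pq_class_eq; apply: qe_idem. Qed.

Lemma gen_pos_crossing x y z : In (x, y, z, true) R -> pq_op (gen x) (gen y) = gen z.
Proof.
move=> xyz; rewrite pq_class_op; apply: pq_class_eq.
by apply: qe_sym; apply: (qe_rel xyz).
Qed.

Lemma gen_neg_crossing x y z : In (x, y, z, false) R -> pq_op (gen z) (gen y) = gen x.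
Proof.
move=> xyz; rewrite pq_class_op; apply: pq_class_eq.
apply: qe_trans (qe_invr R (qgen x) (qgen y)).
by apply: qe_op; [apply: (qe_rel xyz) | apply: qe_refl].
Qed.

Local Open Scope ring_scope.
Variables (K : comNzRingType) (col : A -> K).

(* Evaluation in the Takasaki quandle of K: there x * y = x *^-1 y = 2y - x. *)
Fixpoint takasaki_eval (t : qterm A) : K :=
  match t with
  | qgen a => col a
  | qop u v | qinv u v => takasaki_eval v *+ 2 - takasaki_eval u
  end.

Hypothesis col_fox : forall x y z s, In (x, y, z, s) R -> col z = col y *+ 2 - col x.

Lemma takasaki_eval_qeq t u : qeq R t u -> takasaki_eval t = takasaki_eval u.
Proof.
elim=> {t u} /=; try by move=> *; congruence.
- by move=> x; ring.
- by move=> x y; ring.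
- by move=> x y; ring.
- by move=> x y z; ring.
- by move=> x y z [] /col_fox ->.
Qed.

Lemma gen_neq x y : col x <> col y -> gen x <> gen y.
Proof.
move=> cxy gxy; apply: cxy.
have : proj1_sig (gen x) (qgen x) by apply: qe_refl.
by rewrite gxy => /takasaki_eval_qeq.
Qed.

End PresentedQuandle.

Section Certificates.
Variables (m : nat) (R : seq ('I_m.+1 * 'I_m.+1 * 'I_m.+1 * bool)).

Definition arc (a : nat) : pquandle R := gen R (inord a).

(* [u * v = w] by idempotency or by a crossing; a negative crossing (x, y, z)
   says z = x *^-1 y, i.e. z * y = x. *)
Definition derives (u v w : nat) : bool :=
  [&& u == v & v == w] ||
  has (fun c : 'I_m.+1 * 'I_m.+1 * 'I_m.+1 * bool => let: (x, y, z, s) := c in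
         (v == y) && (if s then (u == x) && (w == z) else (u == z) && (w == x))) R.

Lemma derivesP u v w : derives u v w -> pq_op (arc u) (arc v) = arc w.
Proof.
case/orP => [/andP[/eqP<- /eqP<-] | /hasP[[[[x y] z] []] /inP xyz_in]].
- exact: gen_idem.
- by case/and3P => /eqP-> /eqP-> /eqP->; rewrite /arc !inord_val; apply: gen_pos_crossing.
- by case/and3P => /eqP-> /eqP-> /eqP->; rewrite /arc !inord_val; apply: gen_neg_crossing.
Qed.

Definition justified (q : nat * nat * nat * nat) : bool :=
  let: (a, b, c, d) := q in
  has (fun e => derives a e c && derives b e d || derives e a c && derives e b d)
      (iota 0 m.+1).

Definition agrees (r : nat -> nat) (q : nat * nat * nat * nat) : Prop :=
  let: (a, b, c, d) := q in order_agree (r a) (r b) (r c) (r d).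

(* Curried, so that a proof can introduce and case on the agreements one by one. *)
Definition forces_eq (i j : nat) (cert : seq (nat * nat * nat * nat)) : Prop :=
  forall r : nat -> nat, r i <> r j -> foldr (fun q P => agrees r q -> P) False cert.

Lemma bi_order_agrees lt q :
  strict_linear_order lt ->
  (forall x y z, lt x y -> lt (pq_op z x) (pq_op z y)) ->
  (forall x y z, lt x y -> lt (pq_op x z) (pq_op y z)) ->
  justified q -> agrees (fun a => rank lt (gen R) (inord a)) q.
Proof.
move=> lt_slo lt_left lt_right; case: q => [[[a b] c] d] /hasP[e _].
case/orP => /andP[/derivesP ac /derivesP bd].
- apply: (order_agree_rank lt_slo (f := gen R) (h := fun x => pq_op x (arc e))).
  + by move=> x y; apply: lt_right.
  + exact: esym ac.
  + exact: esym bd.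
- apply: (order_agree_rank lt_slo (f := gen R) (h := pq_op (arc e))).
  + by move=> x y; apply: lt_left.
  + exact: esym ac.
  + exact: esym bd.
Qed.

Local Open Scope ring_scope.

Theorem not_bi_orderable_of_certificate
    (K : comNzRingType) (col : 'I_m.+1 -> K) i j cert :
  all (fun c : 'I_m.+1 * 'I_m.+1 * 'I_m.+1 * bool =>
         let: (x, y, z, _) := c in col z == col y *+ 2 - col x) R ->
  col (inord i) != col (inord j) -> all justified cert -> forces_eq i j cert ->
  ~ bi_orderable (@pq_op _ R).
Proof.
move=> /allP col_fox /eqP col_ij cert_ok cert_forces [lt [lt_slo [lt_left lt_right]]].
pose r a := rank lt (gen R) (inord a).
have r_ij : r i <> r j.
  move/(rank_inj lt_slo); apply: (gen_neq (col := col)) => // x y z s.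
  by move/inP/col_fox/eqP.
have := cert_forces r r_ij; elim: cert {cert_forces} cert_ok => [|q cert IH] //=.
case/andP => q_ok cert_ok agrees_q.
exact/(IH cert_ok)/agrees_q/bi_order_agrees.
Qed.

End Certificates.

(* [inord] does not reduce under [vm_compute] (it goes through the opaque [idP]),
   so literal arcs are turned into [Ordinal]s before the boolean checks run. *)
Lemma inordE (n x : nat) (lt_xn : x < n.+1) : inord x = Ordinal lt_xn.
Proof. by apply: val_inj; rewrite /= inordK. Qed.

Ltac refute_order_agreements :=
  first [ exfalso; lia
        | let H := fresh in intro H; destruct H; refute_order_agreements ].

Ltac certify :=
  first [ rewrite ?inordE; by vm_compute
        | move=> r r_ij /=; refute_order_agreements ].

Definition fox_colouring_6_3 (a : 'I_6) : 'Z_13 := (nth 0 [:: 0; 1; 6; 7; 10; 2] a)%:R%R.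

Lemma not_bi_orderable_6_3 :
  ~ bi_orderable (@knot_quandle_op knot_6_3) /\
  ~ bi_orderable (@knot_quandle_op (mirror knot_6_3)).
Proof.
rewrite /knot_quandle_op /mirror /knot_6_3 /mkc /=; split.
- apply: (not_bi_orderable_of_certificate (col := fox_colouring_6_3) (i := 0) (j := 1)
    (cert := [:: (3, 4, 0, 2); (1, 4, 2, 4); (3, 0, 2, 0); (0, 3, 2, 3);
                 (5, 3, 4, 3); (3, 5, 4, 5); (2, 4, 5, 4)])); certify.
- apply: (not_bi_orderable_of_certificate (col := fox_colouring_6_3) (i := 0) (j := 1)
    (cert := [:: (0, 3, 1, 3); (2, 4, 1, 4); (2, 0, 3, 0); (0, 2, 3, 2);
                 (5, 4, 3, 4); (5, 2, 4, 2); (2, 5, 4, 5)])); certify.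
Qed.

Definition fox_colouring_8_7 (a : 'I_8) : 'Z_23 := (nth 0 [:: 0; 1; 6; 11; 12; 15; 20; 2] a)%:R%R.

Lemma not_bi_orderable_8_7 :
  ~ bi_orderable (@knot_quandle_op knot_8_7) /\
  ~ bi_orderable (@knot_quandle_op (mirror knot_8_7)).
Proof.
rewrite /knot_quandle_op /mirror /knot_8_7 /mkc /=; split.
- apply: (not_bi_orderable_of_certificate (col := fox_colouring_8_7) (i := 0) (j := 1)
    (cert := [:: (1, 0, 7, 0); (4, 1, 0, 1); (1, 5, 2, 5); (2, 6, 3, 6);
                 (4, 0, 3, 0); (0, 4, 3, 4); (7, 4, 5, 4); (4, 7, 5, 7);
                 (5, 2, 6, 2); (2, 5, 6, 5); (6, 3, 7, 3); (3, 6, 7, 6)])); certify.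
- apply: (not_bi_orderable_of_certificate (col := fox_colouring_8_7) (i := 0) (j := 1)
    (cert := [:: (0, 4, 1, 4); (2, 5, 1, 5); (6, 3, 2, 3); (3, 6, 2, 6);
                 (3, 0, 4, 0); (0, 3, 4, 3); (7, 5, 4, 5); (6, 2, 5, 2);
                 (2, 6, 5, 6); (7, 3, 6, 3); (3, 7, 6, 7)])); certify.
Qed.

Definition fox_colouring_8_8 (a : 'I_8) : 'Z_5 := (nth 0 [:: 0; 1; 2; 3; 1; 4; 0; 2] a)%:R%R.

Lemma not_bi_orderable_8_8 :
  ~ bi_orderable (@knot_quandle_op knot_8_8) /\
  ~ bi_orderable (@knot_quandle_op (mirror knot_8_8)).
Proof.
rewrite /knot_quandle_op /mirror /knot_8_8 /mkc /=; split.
- apply: (not_bi_orderable_of_certificate (col := fox_colouring_8_8) (i := 0) (j := 1)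
    (cert := [:: (3, 5, 0, 2); (1, 5, 2, 5); (3, 0, 2, 0); (0, 3, 2, 3);
                 (7, 3, 4, 3); (3, 7, 4, 7); (6, 4, 5, 4); (4, 6, 5, 6);
                 (2, 5, 6, 5); (6, 4, 7, 4)])); certify.
- apply: (not_bi_orderable_of_certificate (col := fox_colouring_8_8) (i := 0) (j := 1)
    (cert := [:: (0, 3, 1, 3); (2, 5, 1, 5); (2, 0, 3, 0); (0, 2, 3, 2);
                 (7, 4, 3, 4); (6, 5, 4, 5); (5, 6, 4, 6); (6, 2, 5, 2);
                 (2, 6, 5, 6); (7, 4, 6, 4)])); certify.
Qed.

Definition fox_colouring_8_10 (a : 'I_8) : 'Z_3 := (nth 0 [:: 0; 1; 1; 2; 0; 1; 1; 2] a)%:R%R.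

Lemma not_bi_orderable_8_10 :
  ~ bi_orderable (@knot_quandle_op knot_8_10) /\
  ~ bi_orderable (@knot_quandle_op (mirror knot_8_10)).
Proof.
rewrite /knot_quandle_op /mirror /knot_8_10 /mkc /=; split.
- apply: (not_bi_orderable_of_certificate (col := fox_colouring_8_10) (i := 0) (j := 1)
    (cert := [:: (3, 5, 0, 2); (1, 5, 2, 5); (3, 0, 2, 0); (0, 3, 2, 3);
                 (6, 3, 4, 3); (3, 6, 4, 6); (7, 4, 5, 4); (4, 7, 5, 7);
                 (2, 5, 6, 5); (6, 4, 7, 4); (4, 6, 7, 6)])); certify.
- apply: (not_bi_orderable_of_certificate (col := fox_colouring_8_10) (i := 0) (j := 1)
    (cert := [:: (0, 3, 1, 3); (2, 5, 1, 5); (2, 0, 3, 0); (0, 2, 3, 2);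
                 (6, 4, 3, 4); (7, 5, 4, 5); (5, 7, 4, 7); (6, 2, 5, 2);
                 (2, 6, 5, 6); (7, 4, 6, 4)])); certify.
Qed.

Definition fox_colouring_8_16 (a : 'I_8) : 'Z_5 := (nth 0 [:: 0; 1; 3; 3; 4; 3; 2; 1] a)%:R%R.

Lemma not_bi_orderable_8_16 :
  ~ bi_orderable (@knot_quandle_op knot_8_16) /\
  ~ bi_orderable (@knot_quandle_op (mirror knot_8_16)).
Proof.
rewrite /knot_quandle_op /mirror /knot_8_16 /mkc /=; split.
- apply: (not_bi_orderable_of_certificate (col := fox_colouring_8_16) (i := 0) (j := 1)
    (cert := [:: (3, 0, 1, 0); (0, 3, 1, 3); (6, 5, 1, 3); (2, 5, 3, 5);
                 (3, 1, 4, 1); (4, 7, 5, 7); (0, 4, 5, 7); (6, 4, 7, 4);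
                 (4, 6, 7, 6)])); certify.
- apply: (not_bi_orderable_of_certificate (col := fox_colouring_8_16) (i := 0) (j := 1)
    (cert := [:: (7, 2, 0, 2); (2, 7, 0, 7); (1, 3, 0, 3); (5, 3, 2, 3);
                 (4, 1, 3, 1); (1, 4, 3, 4); (7, 0, 4, 6); (7, 5, 4, 5);
                 (5, 0, 6, 0); (0, 5, 6, 5); (7, 4, 6, 4); (4, 7, 6, 7)])); certify.
Qed.

Theorem mainTheorem1 :
  forall D : diagram, In D the_knots ->
    ~ bi_orderable (@knot_quandle_op D) /\
    ~ bi_orderable (@knot_quandle_op (mirror D)).
Proof.
move=> D; rewrite /the_knots /=; case=> [<-|[<-|[<-|[<-|[<-|[]]]]]].
- exact: not_bi_orderable_6_3.
- exact: not_bi_orderable_8_7.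
- exact: not_bi_orderable_8_8.
- exact: not_bi_orderable_8_10.
- exact: not_bi_orderable_8_16.
Qed.
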